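(* For an integer $n\ge 3$, $$l_0^{(n-1)^3}(n^3)=\begin{cases}11, & n=3,\\ (n-1)^3+2, & n\ge 4.\end{cases}$$
   Context: For a positive integer $d$ and integer $m$, define $$u_0^d(m)=\binom{m-\lfloor \frac{d}{2}\rfloor -1}{\lfloor \frac{d-1}{2}\rfloor}+\binom{m-\lfloor \frac{d-1}{2}\rfloor -1}{\lfloor \frac{d}{2}\rfloor},$$ where $\binom{a}{b}=0$ when $a<b$; and for a number $x$, $l_0^d(x)=k$ if and only if $k$ is the integer with $u_0^d(k-1)<x\le u_0^d(k)$. *)

From mathcomp Require Import all_boot all_order all_algebra.
Set Implicit Arguments. Unset Strict Implicit. Unset Printing Implicit Defensive.
Import Order.TTheory GRing.Theory Num.Theory.
Local Open Scope ring_scope.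

Definition binz (a : int) (b : nat) : nat :=
  if a < b%:Z then 0%N else 'C(`|a|%N, b).

Definition u0 (d : nat) (m : int) : nat :=
  (binz (m - (d./2)%:Z - 1) (d.-1)./2 + binz (m - ((d.-1)./2)%:Z - 1) d./2)%N.

(* l_0^d(x) = k  iff  u_0^d(k-1) < x <= u_0^d(k). *)
Definition l0_is (d x : nat) (k : int) : Prop :=
  (u0 d (k - 1) < x <= u0 d k)%N.

From mathcomp Require Import all_boot all_order all_algebra zify.
Import Order.TTheory GRing.Theory Num.Theory.
Local Open Scope ring_scope.

(* Since [u0 d] is nondecreasing, [l0_is d x] singles out at most one [k].
   Writing [p = d/2] and [q = (d-1)/2], so that [d = p + q + 1], one gets
   [u0 d (d + t) = C(q + t, q) + C(p + t, p)]; hence [u0 d (d + 1) = d + 1]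
   and [u0 d (d + 2) = (p + 1) (q + 2) >= (d + 1) (d + 3) / 4].  Every [x] with
   [d + 1 < x <= (d + 1) (d + 3) / 4] therefore has [l0 = d + 2], and for
   [d = (n - 1)^3], [n >= 4], the cube [n^3] lies in this window.  For [n = 3]
   it does not ([27 > u0 8 10 = 25]) and [l0 = 11] is a direct computation. *)

Lemma binzE (t b : nat) : binz t%:Z b = 'C(t, b).
Proof. by rewrite /binz ltz_nat; case: ltnP => // /bin_small ->. Qed.

Lemma le_binz (z z' : int) (b : nat) : z <= z' -> (binz z b <= binz z' b)%N.
Proof.
rewrite /binz => le_zz'; case: ifP => // z_ge_b.
by case: ifP => [|_]; [lia | apply: leq_bin2l; lia].
Qed.

Lemma le_u0 (d : nat) (m m' : int) : m <= m' -> (u0 d m <= u0 d m')%N.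
Proof. by move=> le_mm'; rewrite /u0; apply: leq_add; apply: le_binz; lia. Qed.

Lemma l0_isE (d x : nat) (K : int) : (u0 d (K - 1) < x <= u0 d K)%N ->
  forall k, l0_is d x k <-> k = K.
Proof.
move=> xK k; split=> [/andP[ltx lex] | -> //].
case: (ltgtP k K) => // [lt_kK | lt_Kk].
- by have := @le_u0 d k (K - 1); lia.
- by have := @le_u0 d K (k - 1); lia.
Qed.

Lemma mul2_binSS (n : nat) : (2 * 'C(n.+2, n) = n.+2 * n.+1)%N.
Proof.
have -> : 'C(n.+2, n) = 'C(n.+2, 2) by rewrite -(@bin_sub n.+2 2) ?subSS ?subn0.
by have := mul_bin_diag n.+2 1; rewrite bin1 /=; lia.
Qed.

Section CentralValues.

Variable d : nat.
Hypothesis d_gt0 : (0 < d)%N.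

Let p := d./2.
Let q := (d.-1)./2.

Lemma half_halfpred : p = q \/ p = q.+1.
Proof.
rewrite /p /q; case: d d_gt0 => // m _ /=.
by rewrite uphalf_half; case: (odd m); [right | left].
Qed.

Lemma half_add_halfpred : d = (p + q).+1.
Proof.
rewrite /p /q; case: d d_gt0 => // m _ /=.
by have := odd_double_half m; rewrite uphalf_half; lia.
Qed.

Lemma u0_addn (t : nat) : u0 d (d + t)%N = ('C(q + t, q) + 'C(p + t, p))%N.
Proof.
rewrite /u0 -/p -/q half_add_halfpred -!binzE.
by congr (binz _ _ + binz _ _)%N; lia.
Qed.

Lemma u0_addn1 : u0 d (d + 1)%N = d.+1.
Proof.
by rewrite u0_addn !addn1 !binSn; have := half_add_halfpred; lia.
Qed.

Lemma u0_addn2 : u0 d (d + 2)%N = (p.+1 * q.+2)%N.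
Proof.
rewrite u0_addn !addn2.
have := mul2_binSS p; have := mul2_binSS q.
by case: half_halfpred => ->; lia.
Qed.

Lemma l0_is_addn2 (x : nat) : (d.+1 < x)%N -> (4 * x <= d.+1 * d.+3)%N ->
  forall k, l0_is d x k <-> k = (d + 2)%N%:Z.
Proof.
move=> lt_x le_x; apply: l0_isE.
have -> : (d + 2)%N%:Z - 1 = (d + 1)%N by lia.
rewrite u0_addn1 u0_addn2 lt_x /=.
by have := half_add_halfpred; case: half_halfpred => ->; nia.
Qed.

End CentralValues.

Theorem corollary7 (n : nat) (hn : (3 <= n)%N) :
  forall k : int,
    l0_is ((n - 1) ^ 3)%N (n ^ 3)%N k <->
    k = (if n == 3%N then 11%N else ((n - 1) ^ 3 + 2)%N)%:Z.
Proof.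
case: eqP => [-> | n_neq3]; first by apply: l0_isE; vm_compute.
have [t def_n t_ge3] : exists2 t, n = t.+1 & (3 <= t)%N by exists n.-1; lia.
by rewrite def_n subn1 /=; apply: l0_is_addn2; nia.
Qed.
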